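(* Let $G$ be a gap sequence of genus $g$ with associated partition $\lambda$, and $0\le k\le g-1$. Then (i) $a^{(k)}_1>\dots>a^{(k)}_{m_k}\ge1$; (ii) each $a^{(k)}_i$ belongs to $G$; (iii) $\sum_{i=1}^{m_k}a^{(k)}_i=N_{\lambda,k}$.
   Context: A gap sequence of genus $g\ge1$ is a set $G\subset\mathbb Z_{\ge0}$ with $\#G=g$ whose complement $G^c$ contains $0$ and is closed under addition; $G=\{w_1<\dots<w_g\}$, $G^c=\{0=w_1^*<w_2^*<\cdots\}$, $\lambda=(w_g,\dots,w_1)-(g-1,\dots,1,0)$. $m_k=\#\{i:w_i^*<g-k\}$, $a^{(k)}_j=w_{g-k-j+1}-w_j^*$ for $1\le j\le m_k$. $N_{\lambda,k}=\lambda_{k+1}+\dots+\lambda_g$. *)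

From mathcomp Require Import all_boot all_order all_algebra.
Set Implicit Arguments. Unset Strict Implicit. Unset Printing Implicit Defensive.
Import GRing.Theory Num.Theory.

(* A finite set G of naturals is represented by a duplicate-free list. *)
Definition is_gap_sequence (G : seq nat) : Prop :=
  uniq G /\ 0 \notin G /\
  (forall x y : nat, x \notin G -> y \notin G -> x + y \notin G).

Definition genus (G : seq nat) : nat := size G.

(* w_i, 1-indexed: i-th smallest gap *)
Definition gapw (G : seq nat) (i : nat) : nat := nth 0 (sort leq G) i.-1.

(* w*_i, 1-indexed: i-th smallest element of the complement of G.
   All numbers > sumn G are non-gaps, so the list below contains at least
   i elements of the complement, namely its i smallest ones. *)
Definition gapwstar (G : seq nat) (i : nat) : nat :=
  nth 0 [seq x <- iota 0 (sumn G + i.+1) | x \notin G] i.-1.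

Definition gaplambda (G : seq nat) (i : nat) : nat :=
  gapw G (genus G - i + 1) - (genus G - i).

(* m_k = #{ i : w*_i < g - k } = number of non-gaps below g - k *)
Definition gapm (G : seq nat) (k : nat) : nat :=
  count (fun x => x \notin G) (iota 0 (genus G - k)).

Definition gapa (G : seq nat) (k j : nat) : int :=
  (gapw G (genus G - k - j + 1))%:Z - (gapwstar G j)%:Z.

Definition gapN (G : seq nat) (k : nat) : nat :=
  \sum_(k.+1 <= i < (genus G).+1) gaplambda G i.

From mathcomp Require Import all_boot all_order all_algebra zify.
Import GRing.Theory Num.Theory.

(* Let n = g - k. Exactly m_k of 0, ..., n-1 are non-gaps, so the first n - m_k
   gaps are the gaps below n and w_{n-m_k+1}, ..., w_n are all at least n.
   Thus a^{(k)}_j = w_{n-j+1} - w*_j is a gap >= n minus a non-gap < n: it is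
   positive, strictly decreasing in j since both sequences increase, and a gap
   since non-gaps are closed under addition. As the gaps and non-gaps below n
   partition 0, ..., n-1, the sum of the a^{(k)}_j equals
   sum_{i<n} (w_{i+1} - i) = N_{lambda,k}. *)

Lemma sumn_ge_size (s : seq nat) : 0 \notin s -> size s <= sumn s.
Proof.
elim: s => //= x s IH; rewrite in_cons negb_or eq_sym => /andP[x_gt0 /IH].
by rewrite -lt0n in x_gt0; lia.
Qed.

Lemma sorted_ltn_nth_ge (s : seq nat) i : sorted ltn s -> i < size s -> i <= nth 0 s i.
Proof.
move=> s_sorted; elim: i => // i IH lt_i_s.
have : nth 0 s i < nth 0 s i.+1.
  by apply: (sorted_ltn_nth ltn_trans) => //; rewrite inE ltnW.
by have := IH (ltnW lt_i_s); lia.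
Qed.

Section FilterIota.

Variables (a : pred nat) (n : nat).

Lemma size_filter_iotaC :
  size [seq x <- iota 0 n | a x] + size [seq x <- iota 0 n | ~~ a x] = n.
Proof. by rewrite !size_filter count_predC size_iota. Qed.

Lemma sumn_filter_iotaC :
  sumn [seq x <- iota 0 n | a x] + sumn [seq x <- iota 0 n | ~~ a x] = \sum_(0 <= i < n) i.
Proof.
rewrite -sumn_cat (perm_sumn (introT permPl (perm_filterC a (iota 0 n)))).
by rewrite sumnE /index_iota subn0.
Qed.

End FilterIota.

Lemma sort_leq_split (s : seq nat) n : uniq s ->
  sort leq s = [seq x <- iota 0 n | x \in s] ++ sort leq [seq x <- s | n <= x].
Proof.
move=> s_uniq; apply: (sorted_eq leq_trans anti_leq).
- exact: (sort_sorted leq_total).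
- rewrite sorted_pairwise ?pairwise_cat -?sorted_pairwise //; try exact: leq_trans.
  rewrite (sorted_filter leq_trans _ (iota_sorted 0 n)) (sort_sorted leq_total) !andbT.
  apply/allrelP => x y; rewrite mem_filter mem_iota mem_sort mem_filter.
  by case/and3P=> _ _ lt_x_n /andP[le_n_y _]; lia.
rewrite perm_sort.
apply: (@perm_trans _ ([seq x <- s | x < n] ++ [seq x <- s | ~~ (x < n)])).
  by rewrite perm_sym; apply/permPl/perm_filterC.
apply: perm_cat.
  apply: uniq_perm; rewrite ?filter_uniq ?iota_uniq // => x.
  by rewrite !mem_filter mem_iota andbC.
rewrite perm_sym perm_sort (@eq_filter _ _ (fun x => n <= x)) // => x.
by rewrite /= -leqNgt.
Qed.

Lemma gap_subn_nongap (G : seq nat) x y : is_gap_sequence G ->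
  x \in G -> y \notin G -> y <= x -> x - y \in G.
Proof.
case=> _ [_ G_add] xG yG le_yx; apply: contraT => /(G_add _ _ yG).
by rewrite subnKC // xG.
Qed.

Definition gaps_below (G : seq nat) n : seq nat := [seq x <- iota 0 n | x \in G].
Definition nongaps_below (G : seq nat) n : seq nat := [seq x <- iota 0 n | x \notin G].

Section GapWindow.

Variables (G : seq nat) (k : nat).
Hypothesis gapG : is_gap_sequence G.

Local Notation n := (genus G - k).
Local Notation S := (sort leq G).
Local Notation L := (gaps_below G n).
Local Notation W := (nongaps_below G n).

Lemma gapm_E : gapm G k = size W.
Proof. by rewrite size_filter. Qed.

Lemma size_gaps_nongaps_below : size L + size W = n.
Proof. exact: size_filter_iotaC. Qed.

Lemma size_sort_gaps : size S = genus G.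
Proof. exact: size_sort. Qed.

Lemma sort_gaps_split : S = L ++ sort leq [seq x <- G | n <= x].
Proof. exact: sort_leq_split gapG.1. Qed.

Lemma sorted_ltn_gaps : sorted ltn S.
Proof. by rewrite ltn_sorted_uniq_leq sort_uniq gapG.1 (sort_sorted leq_total). Qed.

Lemma sorted_ltn_nongaps : sorted ltn W.
Proof. exact: (sorted_filter ltn_trans _ (iota_ltn_sorted 0 n)). Qed.

Lemma nth_gaps_ge j : size L <= j < genus G -> n <= nth 0 S j.
Proof.
case/andP=> le_L_j lt_j_g; rewrite sort_gaps_split nth_cat ltnNge le_L_j /=.
have := congr1 size sort_gaps_split; rewrite size_sort_gaps size_cat => size_g.
have /(mem_nth 0) : j - size L < size (sort leq [seq x <- G | n <= x]) by lia.
by rewrite mem_sort mem_filter => /andP[].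
Qed.

Lemma nth_nongaps j : j < size W -> nth 0 W j < n /\ nth 0 W j \notin G.
Proof. by move=> /(mem_nth 0); rewrite mem_filter mem_iota => /andP[-> /andP[_ ->]]. Qed.

Lemma gapwstar_E j : 0 < j <= size W -> gapwstar G j = nth 0 W j.-1.
Proof.
case/andP=> j_gt0 le_j_W; rewrite /gapwstar.
have := @sumn_ge_size G gapG.2.1; rewrite -/(genus G) => le_g_sum.
have le_n_sum : n <= sumn G + j.+1 by lia.
by rewrite -(subnKC le_n_sum) iotaD filter_cat -/(nongaps_below G n) nth_cat ifT //; lia.
Qed.

Lemma gapa_E j : 0 < j <= size W ->
  gapa G k j = ((nth 0%N S (n - j))%:Z - (nth 0%N W j.-1)%:Z)%R.
Proof. by move=> j_W; rewrite /gapa gapwstar_E // /gapw addn1. Qed.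

Lemma nth_gaps_window_ge j : 0 < j <= size W -> n <= nth 0 S (n - j).
Proof. by move=> j_W; apply: nth_gaps_ge; have := size_gaps_nongaps_below; lia. Qed.

Lemma gapa_decreasing i : 0 < i < size W -> (gapa G k i.+1 < gapa G k i)%R.
Proof.
case/andP=> i_gt0 lt_i_W; rewrite !gapa_E ?i_gt0 ?(ltnW lt_i_W) //=.
have := size_gaps_nongaps_below => sizes.
have lt_S : nth 0 S (n - i.+1) < nth 0 S (n - i).
  by apply: (sorted_ltn_nth ltn_trans 0 sorted_ltn_gaps); rewrite ?inE ?size_sort_gaps; lia.
have lt_W : nth 0 W i.-1 < nth 0 W i.
  by apply: (sorted_ltn_nth ltn_trans 0 sorted_ltn_nongaps); rewrite ?inE; lia.
lia.
Qed.

Lemma gapa_last_ge1 : 0 < size W -> (1 <= gapa G k (size W))%R.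
Proof.
move=> W_gt0; rewrite gapa_E ?W_gt0 ?leqnn //.
have ge_n := nth_gaps_window_ge (size W) ltac:(lia).
have [lt_n _] := nth_nongaps (size W).-1 ltac:(lia).
lia.
Qed.

Lemma gapa_mem_gaps i : 0 < i <= size W -> gapa G k i \in [seq (x%:Z)%R | x <- G].
Proof.
move=> i_W; have ge_n := nth_gaps_window_ge i i_W.
have [lt_n nongap] := nth_nongaps i.-1 ltac:(lia).
rewrite gapa_E // subzn; last lia.
apply/map_f/gap_subn_nongap => //; last lia.
by rewrite -(mem_sort leq) mem_nth // size_sort_gaps; lia.
Qed.

Lemma gapN_E : gapN G k = \sum_(0 <= i < n) (nth 0 S i - i).
Proof.
rewrite /gapN big_add1 /= big_nat_rev /= -{1}(add0n k) big_addn.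
apply: eq_big_nat => i lt_i_n; rewrite /gaplambda /gapw.
have -> : genus G - (k + genus G - (i + k).+1).+1 = i by lia.
by rewrite addn1.
Qed.

Lemma sum_gaps_window :
  \sum_(1 <= j < (size W).+1) nth 0 S (n - j) = gapN G k + sumn W.
Proof.
have sizes := size_gaps_nongaps_below.
have window : \sum_(1 <= j < (size W).+1) nth 0 S (n - j)
    = \sum_(size L <= i < n) nth 0 S i.
  rewrite big_add1 /= big_nat_rev /= -{1}(add0n (size L)) big_addn.
  have -> : n - size L = size W by lia.
  by apply: eq_big_nat => i lt_i_W; congr nth; lia.
have prefix : \sum_(0 <= i < n) nth 0 S i
    = sumn L + \sum_(size L <= i < n) nth 0 S i.
  rewrite (big_cat_nat _ (n := size L)) //=; last lia.
  congr addn; rewrite sumnE [RHS](big_nth 0) sort_gaps_split.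
  by apply: eq_big_nat => i /andP[_ lt_i_L]; rewrite nth_cat lt_i_L.
have shift : \sum_(0 <= i < n) nth 0 S i = gapN G k + \sum_(0 <= i < n) i.
  rewrite gapN_E -big_split; apply: eq_big_nat => i lt_i_n /=.
  by rewrite subnK // sorted_ltn_nth_ge ?sorted_ltn_gaps // size_sort_gaps; lia.
have := sumn_filter_iotaC (fun x => x \in G) n.
rewrite -/(gaps_below G n) -/(nongaps_below G n); lia.
Qed.

Lemma sum_gapa : (\sum_(1 <= j < (size W).+1) gapa G k j = (gapN G k)%:Z)%R.
Proof.
rewrite (@eq_big_nat _ _ _ 1 (size W).+1 _ _ (fun j j_W => gapa_E j j_W)) sumrB.
rewrite -!(big_morph Posz PoszD (erefl (Posz 0))) sum_gaps_window PoszD.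
have -> : \sum_(1 <= j < (size W).+1) nth 0 W j.-1 = sumn W.
  by rewrite big_add1 /= sumnE [RHS](big_nth 0).
by rewrite addrK.
Qed.

End GapWindow.

Local Open Scope ring_scope.

Theorem lemma2p1 (G : seq nat) (k : nat) :
  is_gap_sequence G -> (1 <= genus G)%N -> (k <= genus G - 1)%N ->
  [/\ (forall i : nat, (1 <= i)%N -> (i < gapm G k)%N -> gapa G k i.+1 < gapa G k i),
      ((0 < gapm G k)%N -> 1 <= gapa G k (gapm G k)),
      (forall i : nat, (1 <= i <= gapm G k)%N -> gapa G k i \in [seq (x%:Z) | x <- G]) &
      \sum_(1 <= i < (gapm G k).+1) gapa G k i = (gapN G k)%:Z].
Proof.
move=> gapG _ _; rewrite gapm_E; split.
- by move=> i i_gt0 lt_i_m; apply: gapa_decreasing; rewrite ?i_gt0.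
- exact: gapa_last_ge1.
- exact: gapa_mem_gaps.
- exact: sum_gapa.
Qed.
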